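(* Let $\widehat{\mathcal{A}}$ be the algebra of formal power series in variables $a,b$ satisfying $ab-ba=b^2$. The $\mathbb{C}$-vector space $$\tilde{\mathcal{A}}_{conv.}:=\Big\{\sum_{p,q}\gamma_{p,q}a^pb^q\ :\ \exists R>1,\ \exists C_R\ \text{such that}\ |\gamma_{p,q}|\le C_RR^{p+q}q!\ \ \forall p,q\Big\}$$ is a subalgebra of $\widehat{\mathcal{A}}$. Moreover $$\tilde{\mathcal{A}}_{conv.}=\Big\{\sum_{p,q}\delta_{p,q}b^qa^p\ :\ \exists R>1,\ \exists D_R\ \text{such that}\ |\delta_{p,q}|\le D_RR^{p+q}q!\ \ \forall p,q\Big\}.$$
   Context: $\mathcal{A}_0$ denotes the $\mathbb{C}$-algebra of polynomials in $a,b$ subject to $ab-ba=b^2$. $\widehat{\mathcal{A}}$ is its completion for the $(a,b)$-adic topology, i.e. the algebra of formal series whose elements can be uniquely written $\sum_{p,q\ge0}\gamma_{p,q}a^pb^q$ and also uniquely $\sum_{p,q\ge0}\delta_{p,q}b^qa^p$, with product extending that of $\mathcal{A}_0$ continuously for the $(a,b)$-adic topology. *)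

From HB Require Import structures.
From mathcomp Require Import all_boot all_order all_algebra.
From mathcomp Require Import complex.
From mathcomp Require Import Rstruct.
Set Implicit Arguments. Unset Strict Implicit. Unset Printing Implicit Defensive.
Import Order.TTheory GRing.Theory Num.Theory.
Local Open Scope ring_scope.

Definition Cx : Type := complex Rdefinitions.R.

(* A formal series in \widehat{A} is represented by its (unique) coefficient
   family gamma in the normal-ordered basis a^p b^q :  sum gamma p q a^p b^q. *)
Definition series := nat -> nat -> Cx.

(* Normal ordering in A_0 (ab - ba = b^2):
   b^q a^p = sum_{i,j} Nord q p i j  a^i b^j.
   Recursion: b^j a = a b^j - j b^(j+1), hence
   b^q a^(p+1) = sum Nord q p i j a^i (a b^j - j b^(j+1)). *)
Fixpoint Nord (q p i j : nat) : Cx :=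
  match p with
  | 0 => if (i == 0)%N && (j == q) then 1 else 0
  | p'.+1 =>
      (if i is i'.+1 then Nord q p' i' j else 0)
      - (if j is j'.+1 then j'%:R * Nord q p' i j' else 0)
  end.

Definition sone : series := fun P Q => if (P == 0)%N && (Q == 0)%N then 1 else 0.

Definition sadd (g h : series) : series := fun P Q => g P Q + h P Q.
Definition sscale (c : Cx) (g : series) : series := fun P Q => c * g P Q.

(* Product in \widehat{A}: (a^p1 b^q1)(a^p2 b^q2) = a^p1 (b^q1 a^p2) b^q2
   = sum_{i,j} Nord q1 p2 i j a^(p1+i) b^(j+q2).  Since the relation is
   homogeneous, Nord q1 p2 i j = 0 unless i + j = q1 + p2 (and i <= p2), so
   only indices < P+Q+1 contribute to the coefficient of a^P b^Q: the sum
   below is the (finite) coefficient of the continuous extension. *)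
Definition smul (g h : series) : series := fun P Q =>
  let M := (P + Q).+1 in
  \sum_(p1 < M) \sum_(q1 < M) \sum_(p2 < M) \sum_(q2 < M) \sum_(i < M) \sum_(j < M)
    (if (p1 + i == P)%N && (j + q2 == Q)%N
     then g p1 q1 * h p2 q2 * Nord q1 p2 i j else 0).

(* The series sum_{p,q} delta p q b^q a^p (anti-normal ordering), written in
   the normal-ordered coefficients: only p + q = i + j contributes. *)
Definition of_antinormal (d : series) : series := fun i j =>
  let M := (i + j).+1 in
  \sum_(p < M) \sum_(q < M) d p q * Nord q p i j.

Definition conv_bound (c : series) : Prop :=
  exists (R CR : Rdefinitions.R), 1 < R /\
    forall p q : nat, `|c p q| <= real_complex Rdefinitions.R (CR * R ^+ (p + q) * (q`!)%:R).

Definition Aconv (g : series) : Prop := conv_bound g.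

(* In A_0 one has b^q a^p = sum_{i + j = p + q} Nord q p i j a^i b^j with
   |Nord q p i j| q! <= 2^p j!, so rewriting a series in the other ordering
   costs only a geometric factor while trading q! for j!.  The product of
   a^p1 b^q1 and a^p2 b^q2 is such a reordering of b^q1 a^p2, followed by
   j! q2! <= (j + q2)!.  All sums involved have polynomially many terms, which
   is absorbed by enlarging R.  The converse reordering comes from the
   anti-automorphism of A_0 fixing a and sending b to -b, and obeys the same
   estimate. *)
From HB Require Import structures.
From mathcomp Require Import all_boot all_order all_algebra.
From mathcomp Require Import complex.
From mathcomp Require Import Rstruct.
From mathcomp Require Import ring lra zify.
From Stdlib Require Import FunctionalExtensionality.
Set Implicit Arguments. Unset Strict Implicit. Unset Printing Implicit Defensive.
Import Order.TTheory GRing.Theory Num.Theory Normc.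
Local Open Scope ring_scope.
Local Open Scope complex_scope.

Local Notation R := Rdefinitions.R.

Lemma normcE (z : Cx) : `|z| = (normc z)%:C.
Proof. by case: z. Qed.

Lemma normc_ge0 (z : Cx) : 0 <= normc z.
Proof. by rewrite -ler0c -normcE. Qed.

Lemma normc_nat n : normc (n%:R : Cx) = n%:R.
Proof. by apply: complexI; rewrite -normcE normr_nat rmorph_nat. Qed.

Lemma normc_sign n : normc ((-1) ^+ n : Cx) = 1.
Proof. by apply: complexI; rewrite -normcE normrX normrN1 expr1n. Qed.

Lemma normcB (x y : Cx) : normc (x - y) <= normc x + normc y.
Proof. by rewrite -(normcN y); apply: le_normcD. Qed.

Lemma normc_sum I (r : seq I) (P : pred I) (F : I -> Cx) :
  normc (\sum_(i <- r | P i) F i) <= \sum_(i <- r | P i) normc (F i).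
Proof.
elim/big_rec2: _ => [|i y z _ IH]; first by rewrite normc0.
by apply: le_trans (le_normcD _ _) _; rewrite lerD2l.
Qed.

Definition growth (c : series) (K X : R) :=
  forall p q, normc (c p q) <= K * X ^+ (p + q) * q`!%:R.

Lemma growth_K_ge0 c K X : growth c K X -> 0 <= K.
Proof.
by move/(_ 0%N 0%N); rewrite expr0 fact0 !mulr1; apply: le_trans; apply: normc_ge0.
Qed.

Lemma growth_le c K X Y : 0 <= X <= Y -> growth c K X -> growth c K Y.
Proof.
move=> /andP[X0 XY] gc p q; have K0 := growth_K_ge0 gc.
apply: le_trans (gc p q) _; rewrite ler_wpM2r // ler_wpM2l // lerXn2r // nnegrE.
exact: le_trans XY.
Qed.

Lemma conv_boundP c : conv_bound c <-> exists K X, 1 <= X /\ growth c K X.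
Proof.
split=> [[X [K [X1 cb]]] | [K [X [X1 gc]]]].
  by exists K, X; split=> [|p q]; [exact: ltW | rewrite -lecR -normcE].
exists (X + 1), K; split=> [|p q]; first lra.
rewrite normcE lecR; apply: (growth_le _ gc); apply/andP; split; lra.
Qed.

Lemma Nord_eq0 p q i j : (i + j != p + q)%N -> Nord q p i j = 0.
Proof.
elim: p i j => [|p IH] i j ne /=.
  by case: ifP => // /andP[/eqP i0 /eqP jq]; move: ne; rewrite i0 jq eqxx.
by case: i ne => [|i]; case: j => [|j] ne; rewrite ?IH ?mulr0 ?subrr //; lia.
Qed.

Lemma NordS q p i j : Nord q p.+1 i j =
  (if i is i'.+1 then Nord q p i' j else 0) - (if j is j'.+1 then j'%:R * Nord q p i j' else 0).
Proof. by []. Qed.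

Lemma Nord_bound p q i j : normc (Nord q p i j) * q`!%:R <= (2 ^ p * j`!)%:R.
Proof.
elim: p i j => [|p IH] i j /=.
  case: ifP => [/andP[_ /eqP ->]|_]; last by rewrite normc0 mul0r.
  by rewrite normc1 mul1r expn0 mul1n.
have IHi : normc (if i is i'.+1 then Nord q p i' j else 0) * q`!%:R <= (2 ^ p * j`!)%:R.
  by case: i => [|i]; rewrite ?normc0 ?mul0r ?IH.
have IHj : normc (if j is j'.+1 then j'%:R * Nord q p i j' else 0) * q`!%:R
           <= (2 ^ p * j`!)%:R.
  clear IHi; case: j => [|j]; first by rewrite normc0 mul0r.
  rewrite normcM normc_nat -mulrA; apply: le_trans (ler_wpM2l (ler0n _ j) (IH i j)) _.
  by rewrite -natrM ler_nat factS; nia.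
apply: le_trans (ler_wpM2r (ler0n _ _) (normcB _ _)) _.
by rewrite mulrDl expnS -mulnA mul2n -addnn natrD lerD.
Qed.

Lemma Nord_shift p q i j :
  Nord q p.+1 i j + q%:R * Nord q.+1 p i j = if i is i'.+1 then Nord q p i' j else 0.
Proof.
elim: p i j => [|p IH] i j.
  case: i => [|[|i]]; case: j => [|j] /=; rewrite ?mulr0 ?subr0 ?sub0r ?addr0 //.
  all: try by rewrite ?mulr0 ?oppr0 ?add0r ?addr0.
  case: (eqVneq j q) => [->|/negbTE jq]; first by rewrite !eqxx /= mulr1 addrC subrr.
  by rewrite eqSS jq /= !mulr0 oppr0 add0r.
rewrite [Nord q p.+2 i j]NordS [Nord q.+1 p.+1 i j]NordS.
case: i => [|i]; case: j => [|j].
- by rewrite !subr0 mulr0 addr0.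
- transitivity (- (j%:R * (Nord q p.+1 0 j + q%:R * Nord q.+1 p 0 j))); first by ring.
  by rewrite IH mulr0 oppr0.
- by rewrite !subr0 IH NordS subr0.
- transitivity ((Nord q p.+1 i j.+1 + q%:R * Nord q.+1 p i j.+1)
                - j%:R * (Nord q p.+1 i.+1 j + q%:R * Nord q.+1 p i.+1 j)); first by ring.
  by rewrite !IH NordS.
Qed.

(* [Anord j i p q] is the coefficient of b^q a^p in a^i b^j: apply to the
   expansion of b^j a^i the anti-automorphism of A_0 fixing a and sending b to -b. *)
Definition Anord (j i p q : nat) : Cx := (-1) ^+ (q + j) * Nord j i p q.

Lemma AnordS j i p q : Anord j i.+1 p q =
  (if p is p'.+1 then Anord j i p' q else 0) + (if q is q'.+1 then q'%:R * Anord j i p q' else 0).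
Proof. by rewrite /Anord NordS; case: p => [|p]; case: q => [|q] /=; rewrite ?addSn ?exprS; ring. Qed.

Lemma Anord_eq0 j i p q : (p + q != i + j)%N -> Anord j i p q = 0.
Proof. by move=> /Nord_eq0 N0; rewrite /Anord N0 mulr0. Qed.

Lemma Anord_bound j i p q : normc (Anord j i p q) * j`!%:R <= (2 ^ i * q`!)%:R.
Proof. by rewrite /Anord normcM normc_sign mul1r Nord_bound. Qed.

Lemma sum_ord_shift n (F : nat -> Cx) :
  F n = 0 -> \sum_(k < n.+1) (if k : nat is k'.+1 then F k' else 0) = \sum_(k < n.+1) F k.
Proof. by move=> Fn; rewrite big_ord_recl big_ord_recr /= Fn add0r addr0. Qed.

Lemma sum_ord_delta2 n a b (F : nat -> nat -> Cx) : (a <= n)%N -> (b <= n)%N ->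
  \sum_(p < n.+1) \sum_(q < n.+1) (if (p == a :> nat) && (q == b :> nat) then F p q else 0) = F a b.
Proof.
move=> an bn.
transitivity (\sum_(p < n.+1 | p == a :> nat) \sum_(q < n.+1 | q == b :> nat) F p q).
  rewrite [RHS]big_mkcond; apply: eq_bigr => p _.
  by case: eqP => _ /=; [rewrite [RHS]big_mkcond | rewrite big1].
rewrite (big_ord1_eq _ (fun p => \sum_(q < n.+1 | q == b :> nat) F p q)) ltnS an.
by rewrite (big_ord1_eq _ (F a)) ltnS bn.
Qed.

Lemma Anord_Nord_sum_le n i' j' i j : (i' + j' <= n)%N ->
  \sum_(p < n.+1) \sum_(q < n.+1) Anord j' i' p q * Nord q p i j
  = if (i' == i) && (j' == j) then 1 else 0.
Proof.
elim: i' i j => [|i' IH] i j hn.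
  transitivity (Nord j' 0 i j); last by rewrite /= eq_sym [j == _]eq_sym.
  rewrite -(sum_ord_delta2 (fun p q => Nord q p i j) (leq0n n) hn).
  apply: eq_bigr => p _; apply: eq_bigr => q _; rewrite /Anord /=.
  case: andP => [[/eqP -> /eqP ->]|_]; last by rewrite !mulr0 mul0r.
  by rewrite addnn -signr_odd odd_double !mulr1 mul1r.
have A0 p q : (n <= p + q)%N -> Anord j' i' p q = 0 by move=> ?; apply: Anord_eq0; lia.
transitivity (\sum_(p < n.+1) \sum_(q < n.+1)
                Anord j' i' p q * (Nord q p.+1 i j + q%:R * Nord q.+1 p i j)).
  under eq_bigr => p _ do under eq_bigr => q _ do rewrite AnordS mulrDl.
  under [RHS]eq_bigr => p _ do under eq_bigr => q _ do rewrite mulrDr.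
  rewrite !(big_split, eq_bigr _ (fun p _ => big_split _ _ _ _ _)) /=.
  congr (_ + _).
  - transitivity (\sum_(p < n.+1)
                    if p : nat is p'.+1 then \sum_(q < n.+1) Anord j' i' p' q * Nord q p'.+1 i j else 0).
      by apply: eq_bigr => -[[|p] ?] _ //=; rewrite big1 // => q _; rewrite mul0r.
    by rewrite sum_ord_shift // big1 // => q _; rewrite A0 ?mul0r //; apply: leq_addr.
  - apply: eq_bigr => p _.
    transitivity (\sum_(q < n.+1)
                    if q : nat is q'.+1 then q'%:R * Anord j' i' p q' * Nord q'.+1 p i j else 0).
      by apply: eq_bigr => -[[|q] ?] _ //=; rewrite mul0r.
    rewrite sum_ord_shift; last by rewrite A0 ?mulr0 ?mul0r //; apply: leq_addl.
    by apply: eq_bigr => q _; rewrite [RHS]mulrCA mulrA.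
under eq_bigr => p _ do under eq_bigr => q _ do rewrite Nord_shift.
case: i => [|i]; last by rewrite IH ?eqSS //; lia.
by rewrite big1 // => p _; rewrite big1 // => q _; rewrite mulr0.
Qed.

Lemma Anord_Nord_sum n i' j' i j : (i + j <= n)%N ->
  \sum_(p < n.+1) \sum_(q < n.+1) Anord j' i' p q * Nord q p i j
  = if (i' == i) && (j' == j) then 1 else 0.
Proof.
move=> hn; have [|big_ij'] := leqP (i' + j') n; first exact: Anord_Nord_sum_le.
case: andP => [[/eqP ei /eqP ej]|_]; first by move: big_ij' hn; rewrite ei ej; lia.
rewrite big1 // => p _; rewrite big1 // => q _.
have [pq|/Anord_eq0 ->] := eqVneq (p + q)%N (i' + j')%N; last by rewrite mul0r.
by rewrite Nord_eq0 ?mulr0 //; lia.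
Qed.

Definition change_basis (k : nat -> nat -> nat -> nat -> Cx) (d : series) : series :=
  fun i j => \sum_(p < (i + j).+1) \sum_(q < (i + j).+1) d p q * k p q i j.

Definition to_antinormal (g : series) : series :=
  change_basis (fun i j p q => Anord j i p q) g.

Lemma to_antinormalK : cancel to_antinormal of_antinormal.
Proof.
move=> g; apply: functional_extensionality => i; apply: functional_extensionality => j.
rewrite /of_antinormal /to_antinormal /change_basis /=; set n := (i + j)%N.
transitivity (\sum_(p < n.+1) \sum_(q < n.+1) \sum_(i' < n.+1) \sum_(j' < n.+1)
                g i' j' * (Anord j' i' p q * Nord q p i j)).
  (* Nord q p i j vanishes unless p + q = n, so the range (p + q).+1 may be replaced by n.+1. *)
  apply: eq_bigr => p _; apply: eq_bigr => q _.
  have [pq|/Nord_eq0 ->] := eqVneq n (p + q)%N; last first.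
    by rewrite mulr0 big1 // => i' _; rewrite big1 // => j' _; rewrite !mulr0.
  rewrite -pq mulr_suml; apply: eq_bigr => i' _; rewrite mulr_suml.
  by apply: eq_bigr => j' _; rewrite mulrA.
under eq_bigr => p _ do rewrite exchange_big.
under eq_bigr => p _ do under eq_bigr => i' _ do rewrite exchange_big.
rewrite exchange_big; under eq_bigr => i' _ do rewrite exchange_big.
rewrite -(sum_ord_delta2 g (leq_addr j i) (leq_addl i j)).
apply: eq_bigr => i' _; apply: eq_bigr => j' _.
under eq_bigr => p _ do rewrite -mulr_sumr.
rewrite -mulr_sumr Anord_Nord_sum //.
by case: ifP; rewrite ?mulr1 ?mulr0.
Qed.

Lemma natrS_le_expr n (Y : R) : 2 <= Y -> n.+1%:R <= Y ^+ n.
Proof.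
move=> Y2; apply: le_trans (_ : (2 ^ n)%:R <= _); first by rewrite ler_nat ltn_expl.
by rewrite natrX lerXn2r // nnegrE; lra.
Qed.

Lemma normc_sum_ord_le n (F : 'I_n.+1 -> Cx) (Y B : R) :
  2 <= Y -> (forall k, normc (F k) <= B) -> normc (\sum_(k < n.+1) F k) <= Y ^+ n * B.
Proof.
move=> Y2 FB; have B0 : 0 <= B := le_trans (normc_ge0 _) (FB ord0).
apply: le_trans (normc_sum _ _ _) _.
apply: le_trans (ler_sum _ (fun k _ => FB k)) _.
by rewrite sumr_const card_ord -mulr_natl ler_wpM2r // natrS_le_expr.
Qed.

Lemma expr_mixed_le (X : R) s t m :
  1 <= X -> (t <= s <= m)%N -> X ^+ s * 2 ^+ t <= (2 * X) ^+ m.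
Proof.
move=> X1 /andP[ts sm]; have X0 : 0 <= X by lra.
apply: le_trans (_ : _ <= X ^+ s * 2 ^+ s) _.
  by rewrite ler_wpM2l ?exprn_ge0 // ler_weXn2l // ler1n.
by rewrite mulrC -exprMn ler_weXn2l // mulr_ege1 // ler1n.
Qed.

Lemma leq_mul_fact m n : (m`! * n`! <= (m + n)`!)%N.
Proof.
rewrite -(bin_fact (leq_addl m n)) addnK mulnC.
by rewrite leq_pmull // bin_gt0 leq_addl.
Qed.

Lemma growth_mulr_le c K X p q (k : Cx) e m : 0 <= X -> growth c K X ->
  normc k * q`!%:R <= (2 ^ e * m`!)%:R ->
  normc (c p q * k) <= K * (X ^+ (p + q) * 2 ^+ e) * m`!%:R.
Proof.
move=> X0 gc kb; have K0 := growth_K_ge0 gc.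
apply: le_trans (_ : _ <= K * X ^+ (p + q) * (normc k * q`!%:R)) _.
  by rewrite normcM mulrA mulrAC ler_wpM2r ?normc_ge0.
apply: le_trans (_ : _ <= K * X ^+ (p + q) * (2 ^ e * m`!)%:R) _.
  by rewrite ler_wpM2l ?mulr_ge0 ?exprn_ge0.
by rewrite natrM natrX !mulrA.
Qed.

Lemma sone_conv : conv_bound sone.
Proof.
apply/conv_boundP; exists 1, 1; split=> // p q; rewrite expr1n !mul1r /sone.
case: ifP => _; last by rewrite normc0.
by rewrite normc1 ler1n fact_gt0.
Qed.

Lemma sadd_conv g h : conv_bound g -> conv_bound h -> conv_bound (sadd g h).
Proof.
move=> /conv_boundP [K1 [X1 [X11 gg]]] /conv_boundP [K2 [X2 [X21 gh]]].
have gg' : growth g K1 (X1 + X2) by apply: growth_le gg; apply/andP; split; lra.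
have gh' : growth h K2 (X1 + X2) by apply: growth_le gh; apply/andP; split; lra.
apply/conv_boundP; exists (K1 + K2), (X1 + X2); split=> [|p q]; first lra.
apply: le_trans (le_normcD _ _) _; rewrite !mulrDl.
exact: lerD (gg' p q) (gh' p q).
Qed.

Lemma sscale_conv c g : conv_bound g -> conv_bound (sscale c g).
Proof.
move=> /conv_boundP [K [X [X1 gg]]].
apply/conv_boundP; exists (normc c * K), X; split=> // p q.
by rewrite /sscale normcM -!mulrA ler_wpM2l ?normc_ge0 // mulrA.
Qed.

Lemma change_basis_conv k d :
  (forall p q i j, normc (k p q i j) * q`!%:R <= (2 ^ p * j`!)%:R) ->
  conv_bound d -> conv_bound (change_basis k d).
Proof.
move=> kb /conv_boundP [K [X [X1 gd]]]; have K0 := growth_K_ge0 gd.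
have X0 : 0 <= X by lra.
have Y2 : 2 <= 2 * X by lra.
apply/conv_boundP; exists K, ((2 * X) ^+ 4); split=> [|i j].
  by rewrite exprn_ege1 //; lra.
set n := (i + j)%N.
have term (p q : 'I_n.+1) :
    normc (d p q * k p q i j) <= K * (2 * X) ^+ (2 * n) * j`!%:R.
  apply: le_trans (growth_mulr_le p X0 gd (kb p q i j)) _.
  rewrite ler_wpM2r // ler_wpM2l // expr_mixed_le //.
  by have := ltn_ord p; have := ltn_ord q; lia.
apply: le_trans (normc_sum_ord_le Y2 (fun p => normc_sum_ord_le Y2 (term p))) _.
rewrite -exprM (_ : (4 * n = n + (n + 2 * n))%N) ?exprD; last lia.
by rewrite le_eqVlt; apply/orP; left; apply/eqP; ring.
Qed.

Lemma of_antinormal_conv d : conv_bound d -> conv_bound (of_antinormal d).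
Proof. exact: (change_basis_conv (fun p q i j => Nord_bound p q i j)). Qed.

Lemma to_antinormal_conv g : conv_bound g -> conv_bound (to_antinormal g).
Proof. exact: (change_basis_conv (fun i j p q => Anord_bound j i p q)). Qed.

Lemma smul_conv g h : conv_bound g -> conv_bound h -> conv_bound (smul g h).
Proof.
move=> /conv_boundP [K1 [Xg [Xg1 gg]]] /conv_boundP [K2 [Xh [Xh1 gh]]].
have K10 := growth_K_ge0 gg; have K20 := growth_K_ge0 gh.
have {}gg : growth g K1 (Xg + Xh) by apply: growth_le gg; apply/andP; split; lra.
have {}gh : growth h K2 (Xg + Xh) by apply: growth_le gh; apply/andP; split; lra.
have : 1 <= Xg + Xh by lra.
move: (Xg + Xh) gg gh => X gg gh X1; have X0 : 0 <= X by lra.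
have Y2 : 2 <= 2 * X by lra.
apply/conv_boundP; exists (K1 * K2), ((2 * X) ^+ 10); split=> [|P Q].
  by rewrite exprn_ege1 //; lra.
set n := (P + Q)%N.
have term (p1 q1 p2 q2 i j : 'I_n.+1) :
    normc (if (p1 + i == P)%N && (j + q2 == Q)%N then g p1 q1 * h p2 q2 * Nord q1 p2 i j else 0)
    <= K1 * K2 * (2 * X) ^+ (4 * n) * Q`!%:R.
  case: ifP => [/andP[_ /eqP jq2]|_]; last first.
    by rewrite normc0 !mulr_ge0 ?exprn_ge0 //; lra.
  rewrite mulrAC normcM.
  apply: le_trans (ler_pM (normc_ge0 _) (normc_ge0 _)
                     (growth_mulr_le p1 X0 gg (Nord_bound p2 q1 i j)) (gh p2 q2)) _.
  rewrite mulrACA [_ * (K2 * _)]mulrACA -natrM [X ^+ _ * _ * _]mulrAC -exprD.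
  apply: ler_pM; rewrite ?mulr_ge0 ?exprn_ge0 ?ler0n //.
    rewrite ler_wpM2l ?mulr_ge0 // expr_mixed_le //.
    by have := ltn_ord p1; have := ltn_ord q1; have := ltn_ord p2; have := ltn_ord q2; lia.
  by rewrite ler_nat -jq2 leq_mul_fact.
rewrite /smul -/n.
apply: le_trans (normc_sum_ord_le Y2 (fun p1 => normc_sum_ord_le Y2 (fun q1 =>
  normc_sum_ord_le Y2 (fun p2 => normc_sum_ord_le Y2 (fun q2 =>
  normc_sum_ord_le Y2 (fun i => normc_sum_ord_le Y2 (term p1 q1 p2 q2 i))))))) _.
rewrite -exprM (_ : (10 * n = n + (n + (n + (n + (n + (n + 4 * n))))))%N) ?exprD; last lia.
by rewrite le_eqVlt; apply/orP; left; apply/eqP; ring.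
Qed.

Theorem proposition1p1p3 :
  (* subalgebra of \widehat{A} *)
  (Aconv sone
   /\ (forall g h : series, Aconv g -> Aconv h -> Aconv (sadd g h))
   /\ (forall (c : Cx) (g : series), Aconv g -> Aconv (sscale c g))
   /\ (forall g h : series, Aconv g -> Aconv h -> Aconv (smul g h)))
  /\
  (* description in the anti-normal ordering b^q a^p *)
  (forall g : series,
     Aconv g <-> exists d : series, conv_bound d /\ g = of_antinormal d).
Proof.
split.
  split; first exact: sone_conv.
  by split; [exact: sadd_conv | split; [exact: sscale_conv | exact: smul_conv]].
move=> g; split=> [gc | [d [dc ->]]]; last exact: of_antinormal_conv.
by exists (to_antinormal g); rewrite to_antinormalK; split; first exact: to_antinormal_conv.
Qed.
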